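(* Let $( f_u )_{u \in [u_1, u_2]}$ be a continuous strictly increasing family of circle homeomorphisms of the type $f_{\ell, \alpha, \theta}$, with $\rho_1 := \rho(f_{u_1}) < \rho_2 := \rho(f_{u_2})$. Here $\rho(f_u)$ is intended as the actual value of $\lim_{n\to\infty}(F_u^n(x)-x)/n$; in other words, $\rho(f_u)$ can take all real values. Then the function $\rho: [u_1, u_2] \to \mathbb{R}$, $\rho(u) := \rho(f_u)$, is an increasing devil's staircase (namely, an increasing, continuous, non-constant function that is constant on each interval of a family with dense union). This implies in particular that each rotation number in $[\rho_1, \rho_2]$ is realized by at least one $f_u$. Moreover, $\rho$ is constant on an interval if, and only if, the constant is $0$ or $p/q$, with $p,q$ coprime integers and $q$ odd.
   Context: Setting: $f_{\ell,\alpha,\theta}:\mathbb{T}\to\mathbb{T}$ ($\mathbb{T}=\mathbb{R}/\mathbb{Z}$) is the first-return map to a horizontal cross-section of length 1 of the unfolded unit-speed linear flow of the internal-wave billiard (reflection preserving angles with the vertical) in a rectangular trapezoid of height $1/2$, vertical left leg, shorter base $\ell>0$, slanted-leg angle $\alpha$, initial direction $\theta$ with $\alpha<\theta<\pi/2$; it is a piecewise-linear orientation-preserving circle homeomorphism with slopes $\Lambda^{\pm1}$, $\Lambda=\sin(\theta+\alpha)/\sin(\theta-\alpha)$, and two break points $a_0,a_1$ satisfying $f(a_j)=-a_j$. A family $(f_u)_{u\in[u_1,u_2]}$ of such maps is continuous strictly increasing if there are lifts $F_u:\mathbb{R}\to\mathbb{R}$ with $u\mapsto F_u$ continuous in sup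 norm and $u\mapsto F_u(x)$ strictly increasing for each $x$ (equivalently, the coordinates of the two break points are continuous strictly decreasing functions of $u$); examples are varying $\ell$, or varying $-\theta$, with the other parameters fixed. *)

From Stdlib Require Import Reals ZArith.
From Coquelicot Require Import Coquelicot.
Open Scope R_scope.

Fixpoint iterR (n : nat) (F : R -> R) (x : R) : R :=
  match n with
  | O => x
  | S m => F (iterR m F x)
  end.

(* The actual (real-valued, lift-dependent) rotation number of a lift F:
   the value of lim_{n->oo} (F^n(x) - x)/n, taken at x = 0. *)
Definition rot (F : R -> R) : R :=
  real (Lim_seq (fun n => (iterR n F 0 - 0) / INR n)).

Definition Lambda (alpha theta : R) : R :=
  sin (theta + alpha) / sin (theta - alpha).

Definition circle_homeo_lift (F : R -> R) : Prop :=
  continuity F /\ (forall x y, x < y -> F x < F y) /\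
  (forall x, F (x + 1) = F x + 1).

(* F is a lift of a map "of the type f_{l,alpha,theta}": a piecewise-linear
   orientation-preserving circle homeomorphism with slopes Lambda^{+-1},
   Lambda = sin(theta+alpha)/sin(theta-alpha) with 0 < alpha < theta < pi/2,
   and two break points a0, a1 with f(a_j) = -a_j (mod 1). *)
Definition trap_type (F : R -> R) : Prop :=
  exists alpha theta a0 a1 : R,
    0 < alpha /\ alpha < theta /\ theta < PI / 2 /\
    circle_homeo_lift F /\
    a0 < a1 /\ a1 < a0 + 1 /\
    (forall x y, a0 <= x <= a1 -> a0 <= y <= a1 ->
       F y - F x = Lambda alpha theta * (y - x)) /\
    (forall x y, a1 <= x <= a0 + 1 -> a1 <= y <= a0 + 1 ->
       F y - F x = (y - x) / Lambda alpha theta) /\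
    (exists k0 : Z, F a0 = - a0 + IZR k0) /\
    (exists k1 : Z, F a1 = - a1 + IZR k1).

Definition devils_staircase (g : R -> R) (a b : R) : Prop :=
  (forall x y, a <= x -> x <= y -> y <= b -> g x <= g y) /\
  (forall x, a <= x <= b -> forall eps, 0 < eps -> exists delta, 0 < delta /\
     forall y, a <= y <= b -> Rabs (y - x) < delta -> Rabs (g y - g x) < eps) /\
  (exists x y, a <= x <= b /\ a <= y <= b /\ g x <> g y) /\
  (* the union of the nondegenerate intervals on which g is constant is
     dense in [a,b] *)
  (forall x, a <= x <= b -> forall eps, 0 < eps ->
     exists c d, a <= c /\ c < d /\ d <= b /\
       (forall y, c <= y <= d -> g y = g c) /\
       exists z, c <= z <= d /\ Rabs (z - x) < eps).

Definition odd_den_rational (r : R) : Prop :=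
  r = 0 \/ exists p q : Z, Z.gcd p q = 1%Z /\ Z.odd q = true /\ r = IZR p / IZR q.

From Stdlib Require Import Reals ZArith.
From Coquelicot Require Import Coquelicot.
From Stdlib Require Import Lra Lia Classical.
Open Scope R_scope.

(* The rotation number of a lift is monotone and continuous in the lift, so [rho] is
   continuous and nondecreasing. A value [p/q] is a plateau value exactly when [F^q - p] is
   not the identity for the maps with that rotation number: if [F^q x0 <> x0 + p] somewhere,
   a periodic orbit of type [(p, q)] survives small monotone perturbations on one side
   (mode locking); conversely on a plateau [[c, d]] we have [F_c + del <= F_d], which by
   Dirichlet approximation forces [rho] to be rational with [F_c^q - p] not the identity.
   For the piecewise-linear maps with slopes [L^(+-1)], the right derivative of [F^q] is
   [L^e] with [e = q] mod 2, so [F^q] is never a translation for [q] odd. For [q] even and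
   [p, q] coprime, take a maximal interval [(y0, y1)] on which [F^q - id - p > 0]; minimality
   of the period lets each orbit cross the break point [a1] relative to the orbit of [y0]
   at most once in [q] steps, so the exponent on [[y0, y1)] is at least its value at [y0]
   minus 2; that value is positive ([F^q - id] increases right of [y0]) and even, hence
   at least 2. Then [F^q - id] is
   nondecreasing on [(y0, y1)], which is absurd as it equals [p] at [y1]. Hence [F^q] is a
   translation and there is no plateau at [p/q]. Plateaus are dense because odd-denominator
   rationals are. *)

Lemma Int_part_bounds x : IZR (Int_part x) <= x < IZR (Int_part x) + 1.
Proof. destruct (base_Int_part x); lra. Qed.

Lemma nonpos_of_bounded_multiples D B : (forall k : nat, INR k * D <= B) -> D <= 0.
Proof.
  intros H. apply Rnot_lt_le. intros HD.
  destruct (INR_unbounded (B / D)) as [n Hn].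
  apply (Rmult_lt_compat_r D) in Hn; [|lra].
  unfold Rdiv in Hn. rewrite Rmult_assoc, Rinv_l, Rmult_1_r in Hn by lra.
  specialize (H n). lra.
Qed.

Lemma eventually_inv_INR_lt eps : 0 < eps ->
  exists N : nat, (1 <= N)%nat /\ forall n, (N <= n)%nat -> 1 / INR n < eps.
Proof.
  intros He. destruct (archimed_cor1 eps He) as [N [HN HN0]].
  exists N. split; [lia|]. intros n Hn.
  assert (0 < INR N) by (apply lt_0_INR; lia).
  assert (INR N <= INR n) by (apply le_INR; auto).
  unfold Rdiv. rewrite Rmult_1_l. eapply Rle_lt_trans; [|apply HN].
  apply Rinv_le_contravar; lra.
Qed.

Lemma continuity_eps_delta f : continuity f -> forall x eps, 0 < eps ->
  exists d, 0 < d /\ forall y, Rabs (y - x) < d -> Rabs (f y - f x) < eps.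
Proof.
  intros Hf x eps He. destruct (Hf x eps He) as [d [Hd H]].
  exists d. split; auto. intros y Hy.
  destruct (Req_dec y x) as [->|Hne]; [rewrite Rminus_diag, Rabs_R0; auto|].
  apply H. repeat split; auto.
Qed.

Lemma shift_Z_of_shift_1 (h : R -> R) c : (forall x, h (x + 1) = h x + c) ->
  forall k x, h (x + IZR k) = h x + IZR k * c.
Proof.
  intros H.
  assert (Hnat : forall n x, h (x + INR n) = h x + INR n * c).
  { induction n as [|n IH]; intros x; [simpl; rewrite Rplus_0_r; ring|].
    rewrite S_INR, <- Rplus_assoc, H, IH. ring. }
  intros k x. destruct (Z_le_gt_dec 0 k).
  - rewrite <- (Z2Nat.id k), <- INR_IZR_INZ by lia. apply Hnat.
  - pose proof (Hnat (Z.to_nat (- k)) (x + IZR k)) as E.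
    rewrite INR_IZR_INZ, Z2Nat.id, opp_IZR in E by lia.
    replace (x + IZR k + - IZR k) with x in E by ring. lra.
Qed.

Lemma periodic_pos_lower_bound h : continuity h -> (forall x, h (x + 1) = h x) ->
  (forall x, 0 < h x) -> exists d, 0 < d /\ forall x, d <= h x.
Proof.
  intros Hc Hp Hpos.
  destruct (continuity_ab_min h 0 1) as [m [Hm _]]; [lra | intros; apply Hc |].
  exists (h m). split; auto. intros x.
  pose proof (Int_part_bounds x).
  replace (h x) with (h ((x - IZR (Int_part x)) + IZR (Int_part x))) by (f_equal; ring).
  rewrite (shift_Z_of_shift_1 h 0), Rmult_0_r, Rplus_0_r by (intros; rewrite Hp; ring).
  apply Hm. lra.
Qed.

Definition continuous_on_closed a b (f : R -> R) : Prop :=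
  forall x, a <= x <= b -> forall eps, 0 < eps -> exists d, 0 < d /\
    forall y, a <= y <= b -> Rabs (y - x) < d -> Rabs (f y - f x) < eps.

Lemma continuous_on_closed_of_continuity f a b : continuity f -> continuous_on_closed a b f.
Proof.
  intros Hf x _ eps He. destruct (continuity_eps_delta f Hf x eps He) as [d [Hd H]].
  exists d. split; auto.
Qed.

Lemma continuous_on_closed_sub a b c d f : a <= c -> d <= b ->
  continuous_on_closed a b f -> continuous_on_closed c d f.
Proof.
  intros Hac Hdb Hf x Hx eps He. destruct (Hf x ltac:(lra) eps He) as [e [He' H]].
  exists e. split; auto. intros y Hy. apply H. lra.
Qed.

Lemma continuous_on_closed_opp f a b :
  continuous_on_closed a b f -> continuous_on_closed a b (fun x => - f x).
Proof.
  intros Hf x Hx eps He. destruct (Hf x Hx eps He) as [d [Hd H]].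
  exists d. split; auto. intros y Hy Hyx.
  replace (- f y - - f x) with (- (f y - f x)) by ring. rewrite Rabs_Ropp. auto.
Qed.

Lemma continuity_reflect f : continuity f -> continuity (fun t => f (- t)).
Proof.
  intros Hf t. apply (continuity_pt_comp (fun x => - x) f); [|apply Hf].
  apply continuity_pt_opp, continuity_pt_id.
Qed.

Lemma last_crossing_before k a b r : continuous_on_closed a b k -> a <= b -> k a <= r < k b ->
  exists c, a <= c < b /\ k c = r /\ forall y, c < y <= b -> r < k y.
Proof.
  intros Hk Hab [Ha Hb].
  set (E := fun y => a <= y <= b /\ k y <= r).
  destruct (completeness E) as [c [Hub Hlub]].
  { exists b. intros y [Hy _]. lra. }
  { exists a. split; [lra | auto]. }
  assert (Hac : a <= c) by (apply Hub; split; [lra | auto]).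
  assert (Hcb : c <= b) by (apply Hlub; intros y [Hy _]; lra).
  assert (Hafter : forall y, c < y <= b -> r < k y).
  { intros y Hy. apply Rnot_le_lt. intros Hky.
    assert (y <= c) by (apply Hub; split; [lra | auto]). lra. }
  assert (Hle : k c <= r).
  { apply Rnot_lt_le. intros Hlt.
    destruct (Hk c (conj Hac Hcb) (k c - r)) as [d [Hd Hnear]]; [lra|].
    assert (Hex : ~ (forall y, E y -> y <= c - d / 2)).
    { intros H. assert (c <= c - d / 2) by (apply Hlub; exact H). lra. }
    apply not_all_ex_not in Hex as [y Hy]. apply imply_to_and in Hy as [[Hy Hky] Hyc].
    assert (y <= c) by (apply Hub; split; auto).
    specialize (Hnear y Hy ltac:(apply Rabs_def1; lra)). apply Rabs_def2 in Hnear. lra. }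
  assert (Hcb' : c < b) by (destruct (Req_dec c b) as [->|]; lra).
  assert (Hge : r <= k c).
  { apply Rnot_lt_le. intros Hlt.
    destruct (Hk c (conj Hac Hcb) (r - k c)) as [d [Hd Hnear]]; [lra|].
    set (y := Rmin (c + d / 2) b).
    assert (c < y <= c + d / 2 /\ y <= b)
      by (unfold y; repeat split; [apply Rmin_glb_lt | apply Rmin_l | apply Rmin_r]; lra).
    specialize (Hnear y ltac:(lra) ltac:(apply Rabs_def1; lra)). apply Rabs_def2 in Hnear.
    specialize (Hafter y ltac:(lra)). lra. }
  exists c. repeat split; auto; lra.
Qed.

Lemma ivt_on_closed k a b r : continuous_on_closed a b k -> a <= b -> k a <= r <= k b ->
  exists c, a <= c <= b /\ k c = r.
Proof.
  intros Hk Hab Hr. destruct (Req_dec (k b) r) as [E|E].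
  - exists b. split; [lra | auto].
  - destruct (last_crossing_before k a b r) as [c [Hc [Hkc _]]]; auto; [lra|].
    exists c. split; [lra | auto].
Qed.

Lemma le_of_right_locally_nondecreasing k a b : continuous_on_closed a b k -> a <= b ->
  (forall z, a <= z < b -> exists d, 0 < d /\ forall w, z <= w < z + d -> k z <= k w) ->
  k a <= k b.
Proof.
  intros Hk Hab Hloc. apply Rnot_lt_le. intros Hlt.
  destruct (last_crossing_before (fun x => - k x) a b (- (k a + k b) / 2))
    as [c [Hc [Hkc Hafter]]]; [apply continuous_on_closed_opp; auto | auto | lra |].
  destruct (Hloc c Hc) as [d [Hd Hright]].
  set (w := Rmin (c + d / 2) b).
  assert (c < w <= c + d / 2 /\ w <= b)
    by (unfold w; repeat split; [apply Rmin_glb_lt | apply Rmin_l | apply Rmin_r]; lra).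
  specialize (Hafter w ltac:(lra)). specialize (Hright w ltac:(lra)). lra.
Qed.

Lemma positive_component k x0 : continuity k -> (forall x, k (x + 1) = k x) -> 0 < k x0 ->
  (exists z, k z <= 0) ->
  exists y0 y1, y0 < y1 /\ k y0 = 0 /\ k y1 = 0 /\ forall y, y0 < y < y1 -> 0 < k y.
Proof.
  intros Hk Hp Hx0 [z Hz].
  set (z0 := z + IZR (Int_part (x0 - z))).
  pose proof (Int_part_bounds (x0 - z)).
  assert (Hz0 : k z0 = k z)
    by (unfold z0; rewrite (shift_Z_of_shift_1 k 0) by (intros; rewrite Hp; ring); ring).
  destruct (last_crossing_before k z0 x0 0) as [y0 [Hy0 [Hky0 Hpos0]]];
    [apply continuous_on_closed_of_continuity; auto | unfold z0; lra | lra |].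
  destruct (last_crossing_before (fun t => k (- t)) (- (z0 + 1)) (- x0) 0)
    as [t1 [Ht1 [Hkt1 Hpos1]]];
    [apply continuous_on_closed_of_continuity, continuity_reflect; auto | unfold z0; lra
    | rewrite !Ropp_involutive, Hp; lra |].
  exists y0, (- t1). repeat split; [lra | auto | auto |].
  intros y Hy. destruct (Rle_or_lt y x0); [apply Hpos0; lra|].
  replace y with (- - y) by ring. apply Hpos1. lra.
Qed.

(** * Lifts and rotation numbers *)

Lemma iterR_add m n F x : iterR (m + n) F x = iterR m F (iterR n F x).
Proof. induction m as [|m IH]; simpl; congruence. Qed.

Lemma iterR_comm m n F x : iterR m F (iterR n F x) = iterR n F (iterR m F x).
Proof. rewrite <- !iterR_add, Nat.add_comm. reflexivity. Qed.

Section Lift.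
Variable F : R -> R.
Hypothesis HF : circle_homeo_lift F.

Lemma lift_shift_Z k x : F (x + IZR k) = F x + IZR k.
Proof. destruct HF as [_ [_ Hp]]. rewrite (shift_Z_of_shift_1 F 1 Hp). ring. Qed.

Lemma lift_le x y : x <= y -> F x <= F y.
Proof.
  destruct HF as [_ [Hm _]]. intros Hxy.
  destruct (Rle_lt_or_eq_dec x y Hxy) as [H|<-]; [left; auto | lra].
Qed.

Lemma lift_inj x y : F x = F y -> x = y.
Proof.
  destruct HF as [_ [Hm _]]. intros E.
  destruct (Rtotal_order x y) as [H|[H|H]]; auto; apply Hm in H; lra.
Qed.

Lemma lift_displacement_close x y : Rabs ((F y - y) - (F x - x)) <= 1.
Proof.
  set (k := Int_part (y - x)). pose proof (Int_part_bounds (y - x)) as Hk. fold k in Hk.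
  assert (Ey : F y = F (y - IZR k) + IZR k)
    by (rewrite <- lift_shift_Z; f_equal; ring).
  assert (F x <= F (y - IZR k)) by (apply lift_le; lra).
  assert (F (y - IZR k) <= F x + 1)
    by (rewrite <- (lift_shift_Z 1); apply lift_le; simpl; lra).
  apply Rabs_le. lra.
Qed.

Lemma iterR_lift n : circle_homeo_lift (iterR n F).
Proof.
  destruct HF as [Hc [Hm Hp]].
  induction n as [|n [IHc [IHm IHp]]]; repeat split; simpl.
  - intros x. apply continuity_pt_id.
  - auto.
  - auto.
  - apply (continuity_comp (iterR n F) F); auto.
  - intros x y Hxy. apply Hm, IHm, Hxy.
  - intros x. rewrite IHp, Hp. reflexivity.
Qed.

End Lift.

Lemma iterR_shift_Z F n k x : circle_homeo_lift F ->
  iterR n F (x + IZR k) = iterR n F x + IZR k.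
Proof. intros HF. apply lift_shift_Z, iterR_lift, HF. Qed.

Section RotationNumber.
Variable F : R -> R.
Hypothesis HF : circle_homeo_lift F.

Let mean n := (iterR n F 0 - 0) / INR n.

Lemma orbit0_add m n : Rabs (iterR (m + n) F 0 - iterR m F 0 - iterR n F 0) <= 1.
Proof.
  rewrite iterR_add.
  pose proof (lift_displacement_close _ (iterR_lift F HF m) 0 (iterR n F 0)) as H.
  rewrite !Rminus_0_r in H.
  replace (iterR m F (iterR n F 0) - iterR m F 0 - iterR n F 0)
    with (iterR m F (iterR n F 0) - iterR n F 0 - iterR m F 0) by ring.
  exact H.
Qed.

Lemma orbit0_mul k n : Rabs (iterR (k * n) F 0 - INR k * iterR n F 0) <= INR k.
Proof.
  induction k as [|k IH].
  - simpl. rewrite Rmult_0_l, Rminus_0_r, Rabs_R0. lra.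
  - replace (S k * n)%nat with (n + k * n)%nat by lia. rewrite S_INR.
    pose proof (orbit0_add n (k * n)) as H.
    apply Rabs_le_between in H. apply Rabs_le_between in IH. apply Rabs_le. lra.
Qed.

Lemma mean_mul_close k n : (1 <= k)%nat -> (1 <= n)%nat ->
  Rabs (mean (k * n) - mean n) <= 1 / INR n.
Proof.
  intros Hk Hn. unfold mean. rewrite !Rminus_0_r, mult_INR.
  assert (0 < INR k) by (apply lt_0_INR; lia).
  assert (0 < INR n) by (apply lt_0_INR; lia).
  replace (iterR (k * n) F 0 / (INR k * INR n) - iterR n F 0 / INR n)
    with ((iterR (k * n) F 0 - INR k * iterR n F 0) / (INR k * INR n)) by (field; lra).
  unfold Rdiv. rewrite Rabs_mult, Rabs_inv, (Rabs_pos_eq (INR k * INR n)) by nra.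
  replace (1 * / INR n) with (INR k * / (INR k * INR n)) by (field; lra).
  apply Rmult_le_compat_r; [left; apply Rinv_0_lt_compat; nra | apply orbit0_mul].
Qed.

Lemma mean_cauchy m n : (1 <= m)%nat -> (1 <= n)%nat ->
  Rabs (mean m - mean n) <= 1 / INR m + 1 / INR n.
Proof.
  intros Hm Hn.
  pose proof (mean_mul_close n m Hn Hm) as Hnm.
  pose proof (mean_mul_close m n Hm Hn) as Hmn. rewrite Nat.mul_comm in Hmn.
  apply Rabs_le_between in Hnm. apply Rabs_le_between in Hmn. apply Rabs_le. lra.
Qed.

Lemma rot_is_lim : is_lim_seq mean (rot F).
Proof.
  assert (Hc : ex_lim_seq_cauchy mean).
  { intros [eps He]; simpl.
    destruct (eventually_inv_INR_lt (eps / 2)) as [N [HN HN']]; [lra|].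
    exists N. intros n m Hn Hm. eapply Rle_lt_trans; [apply mean_cauchy; lia|].
    pose proof (HN' n Hn). pose proof (HN' m Hm). lra. }
  apply ex_lim_seq_cauchy_corr in Hc as [l Hl].
  unfold rot. fold mean. rewrite (is_lim_seq_unique _ _ Hl). exact Hl.
Qed.

Lemma mean_rot_close m : (1 <= m)%nat -> Rabs (mean m - rot F) <= 1 / INR m.
Proof.
  intros Hm. apply Rle_plus_epsilon. intros eps He.
  pose proof rot_is_lim as L. apply is_lim_seq_Reals in L.
  destruct (L (eps / 2)) as [N1 HN1]; [lra|].
  destruct (eventually_inv_INR_lt (eps / 2)) as [N2 [HN2 HN2']]; [lra|].
  set (k := Nat.max N1 N2).
  specialize (HN1 k ltac:(lia)). unfold R_dist in HN1.
  specialize (HN2' k ltac:(lia)).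
  pose proof (mean_cauchy m k Hm ltac:(lia)) as C.
  pose proof (Rabs_triang (mean m - mean k) (mean k - rot F)) as T.
  replace (mean m - mean k + (mean k - rot F)) with (mean m - rot F) in T by ring. lra.
Qed.

Lemma rot_orbit0_close n : Rabs (iterR n F 0 - INR n * rot F) <= 1.
Proof.
  destruct n as [|n]; [simpl; rewrite Rmult_0_l, Rminus_0_r, Rabs_R0; lra|].
  assert (Hn : 0 < INR (S n)) by (apply lt_0_INR; lia).
  pose proof (mean_rot_close (S n) ltac:(lia)) as H. unfold mean in H.
  replace (iterR (S n) F 0 - INR (S n) * rot F)
    with (INR (S n) * ((iterR (S n) F 0 - 0) / INR (S n) - rot F)) by (field; lra).
  rewrite Rabs_mult, Rabs_pos_eq by lra.
  apply (Rmult_le_compat_l (INR (S n))) in H; [|lra].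
  replace (INR (S n) * (1 / INR (S n))) with 1 in H by (field; lra). exact H.
Qed.

Lemma rot_displacement_close n x : Rabs (iterR n F x - x - INR n * rot F) <= 2.
Proof.
  pose proof (rot_orbit0_close n) as H0.
  pose proof (lift_displacement_close _ (iterR_lift F HF n) 0 x) as H.
  apply Rabs_le_between in H. apply Rabs_le_between in H0. apply Rabs_le. lra.
Qed.

End RotationNumber.

Section Displacement.
Variable F : R -> R.
Hypothesis HF : circle_homeo_lift F.

Lemma rot_ge_of_displacement_ge n c : (1 <= n)%nat ->
  (forall x, c <= iterR n F x - x) -> c <= INR n * rot F.
Proof.
  intros Hn H.
  assert (K : forall k, INR k * c <= iterR (k * n) F 0).
  { induction k as [|k IH]; [simpl; lra|].
    replace (S k * n)%nat with (n + k * n)%nat by lia. rewrite iterR_add, S_INR.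
    specialize (H (iterR (k * n) F 0)). lra. }
  enough (c - INR n * rot F <= 0) by lra.
  apply (nonpos_of_bounded_multiples _ 1). intros k.
  pose proof (K k). pose proof (rot_orbit0_close F HF (k * n)) as B.
  apply Rabs_le_between in B. rewrite mult_INR in B. nra.
Qed.

Lemma rot_le_of_displacement_le n c :
  (forall x, iterR n F x - x <= c) -> INR n * rot F <= c.
Proof.
  intros H.
  assert (K : forall k, iterR (k * n) F 0 <= INR k * c).
  { induction k as [|k IH]; [simpl; lra|].
    replace (S k * n)%nat with (n + k * n)%nat by lia. rewrite iterR_add, S_INR.
    specialize (H (iterR (k * n) F 0)). lra. }
  enough (INR n * rot F - c <= 0) by lra.
  apply (nonpos_of_bounded_multiples _ 1). intros k.
  pose proof (K k). pose proof (rot_orbit0_close F HF (k * n)) as B.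
  apply Rabs_le_between in B. rewrite mult_INR in B. nra.
Qed.

Lemma displacement_continuous n : continuity (fun x => iterR n F x - x).
Proof.
  destruct (iterR_lift F HF n) as [Hc _].
  intros x. apply continuity_pt_minus; [apply Hc | apply continuity_pt_id].
Qed.

Lemma displacement_periodic n x : iterR n F (x + 1) - (x + 1) = iterR n F x - x.
Proof. destruct (iterR_lift F HF n) as [_ [_ Hp]]. rewrite Hp. ring. Qed.

Lemma exists_displacement_eq n c :
  (exists a, c <= iterR n F a - a) -> (exists b, iterR n F b - b <= c) ->
  exists x, iterR n F x = x + c.
Proof.
  intros [a Ha] [b Hb].
  set (a' := a + IZR (Int_part (b - a) + 1)).
  assert (Ha' : iterR n F a' - a' = iterR n F a - a)
    by (unfold a'; rewrite iterR_shift_Z by auto; ring).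
  pose proof (Int_part_bounds (b - a)).
  destruct (ivt_on_closed (fun x => iterR n F x - x) b a' c) as [x [_ Hx]].
  - apply continuous_on_closed_of_continuity, displacement_continuous.
  - unfold a'. rewrite plus_IZR. lra.
  - lra.
  - exists x. lra.
Qed.

Lemma exists_displacement_ge n c : (1 <= n)%nat -> c <= INR n * rot F ->
  exists a, c <= iterR n F a - a.
Proof.
  intros Hn Hc. apply NNPP. intros Hnone.
  destruct (periodic_pos_lower_bound (fun x => c - (iterR n F x - x))) as [d [Hd Hmin]].
  - intros x. apply continuity_pt_minus; [apply continuity_pt_const; intros ? ? ; auto|].
    apply displacement_continuous.
  - intros x. rewrite displacement_periodic. reflexivity.
  - intros x. enough (iterR n F x - x < c) by lra.
    apply Rnot_le_lt. intros H. apply Hnone. exists x. exact H.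
  - enough (INR n * rot F <= c - d) by lra.
    apply rot_le_of_displacement_le. intros x. specialize (Hmin x). simpl in Hmin. lra.
Qed.

Lemma exists_displacement_le n c : (1 <= n)%nat -> INR n * rot F <= c ->
  exists b, iterR n F b - b <= c.
Proof.
  intros Hn Hc. apply NNPP. intros Hnone.
  destruct (periodic_pos_lower_bound (fun x => (iterR n F x - x) - c)) as [d [Hd Hmin]].
  - intros x. apply continuity_pt_minus; [apply displacement_continuous|].
    apply continuity_pt_const. intros ? ?; auto.
  - intros x. rewrite displacement_periodic. reflexivity.
  - intros x. enough (c < iterR n F x - x) by lra.
    apply Rnot_le_lt. intros H. apply Hnone. exists x. exact H.
  - enough (c + d <= INR n * rot F) by lra.
    apply rot_ge_of_displacement_ge; auto. intros x. specialize (Hmin x). simpl in Hmin. lra.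
Qed.

Lemma exists_periodic_point n c : (1 <= n)%nat -> INR n * rot F = c ->
  exists y, iterR n F y = y + c.
Proof.
  intros Hn Hc. apply exists_displacement_eq.
  - apply exists_displacement_ge; auto; lra.
  - apply exists_displacement_le; auto; lra.
Qed.

Lemma rot_of_periodic_point n y N : (1 <= n)%nat -> iterR n F y = y + IZR N ->
  INR n * rot F = IZR N.
Proof.
  intros Hn H.
  assert (K : forall k, iterR (k * n) F y = y + INR k * IZR N).
  { induction k as [|k IH]; [simpl; ring|].
    replace (S k * n)%nat with (n + k * n)%nat by lia.
    rewrite iterR_add, IH, S_INR.
    replace (INR k * IZR N) with (IZR (Z.of_nat k * N)) by (rewrite mult_IZR, <- INR_IZR_INZ; ring).
    rewrite iterR_shift_Z, H by auto. rewrite mult_IZR, <- INR_IZR_INZ. ring. }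
  assert (B : forall k, Rabs (INR k * (IZR N - INR n * rot F)) <= 2).
  { intros k. pose proof (rot_displacement_close F HF (k * n) y) as B.
    rewrite K, mult_INR in B.
    replace (INR k * (IZR N - INR n * rot F))
      with (y + INR k * IZR N - y - INR k * INR n * rot F) by ring. exact B. }
  assert (IZR N - INR n * rot F <= 0).
  { apply (nonpos_of_bounded_multiples _ 2). intros k.
    specialize (B k). apply Rabs_le_between in B. lra. }
  assert (INR n * rot F - IZR N <= 0).
  { apply (nonpos_of_bounded_multiples _ 2). intros k.
    specialize (B k). apply Rabs_le_between in B. lra. }
  lra.
Qed.

End Displacement.

Lemma iterR_le_of_le F G : circle_homeo_lift F -> (forall x, F x <= G x) ->
  forall n x, iterR n F x <= iterR n G x.
Proof.
  intros HF H n. induction n as [|n IH]; intros x; simpl; [lra|].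
  eapply Rle_trans; [apply (lift_le F HF), IH | apply H].
Qed.

Lemma iterR_gap F G d : circle_homeo_lift F -> 0 <= d -> (forall x, F x + d <= G x) ->
  forall n x, iterR (S n) F x + d <= iterR (S n) G x.
Proof.
  intros HF Hd H n. induction n as [|n IH]; intros x; [apply H|].
  specialize (IH x). specialize (H (iterR (S n) G x)).
  assert (F (iterR (S n) F x) <= F (iterR (S n) G x)) by (apply (lift_le F HF); lra).
  change (F (iterR (S n) F x) + d <= G (iterR (S n) G x)). lra.
Qed.

Lemma rot_le_of_le F G : circle_homeo_lift F -> circle_homeo_lift G ->
  (forall x, F x <= G x) -> rot F <= rot G.
Proof.
  intros HF HG H. enough (rot F - rot G <= 0) by lra.
  apply (nonpos_of_bounded_multiples _ 2). intros k.
  pose proof (rot_orbit0_close F HF k) as BF. pose proof (rot_orbit0_close G HG k) as BG.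
  pose proof (iterR_le_of_le F G HF H k 0).
  apply Rabs_le_between in BF. apply Rabs_le_between in BG. lra.
Qed.

Lemma iterR_near F : continuity F -> forall n y eps, 0 < eps -> exists eta, 0 < eta /\
  forall G, (forall x, Rabs (G x - F x) < eta) -> Rabs (iterR n G y - iterR n F y) < eps.
Proof.
  intros HF n y. induction n as [|n IH]; intros eps He.
  - exists 1. split; [lra|]. intros G _. simpl. rewrite Rminus_diag, Rabs_R0. exact He.
  - destruct (continuity_eps_delta F HF (iterR n F y) (eps / 2)) as [d [Hd HFd]]; [lra|].
    destruct (IH (Rmin d (eps / 2))) as [eta [Heta Hn]]; [apply Rmin_pos; lra|].
    exists (Rmin eta (eps / 2)). split; [apply Rmin_pos; lra|]. intros G HG. simpl.
    pose proof (Rmin_l eta (eps / 2)). pose proof (Rmin_r eta (eps / 2)).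
    pose proof (Rmin_l d (eps / 2)). pose proof (Rmin_r d (eps / 2)).
    assert (A : Rabs (iterR n G y - iterR n F y) < Rmin d (eps / 2)).
    { apply Hn. intros x. specialize (HG x). lra. }
    specialize (HFd (iterR n G y) ltac:(lra)). specialize (HG (iterR n G y)).
    replace (G (iterR n G y) - F (iterR n F y))
      with ((G (iterR n G y) - F (iterR n G y)) + (F (iterR n G y) - F (iterR n F y))) by ring.
    eapply Rle_lt_trans; [apply Rabs_triang | lra].
Qed.

Lemma rot_continuous F : circle_homeo_lift F -> forall eps, 0 < eps -> exists eta, 0 < eta /\
  forall G, circle_homeo_lift G -> (forall x, Rabs (G x - F x) < eta) ->
  Rabs (rot G - rot F) < eps.
Proof.
  intros HF eps He.
  destruct (eventually_inv_INR_lt (eps / 3)) as [N [HN HN']]; [lra|].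
  specialize (HN' N (le_n N)).
  assert (HN0 : 0 < INR N) by (apply lt_0_INR; lia).
  destruct (iterR_near F (proj1 HF) N 0 1) as [eta [Heta Hnear]]; [lra|].
  exists eta. split; auto. intros G HG HGF.
  specialize (Hnear G HGF). apply Rabs_def2 in Hnear.
  pose proof (rot_orbit0_close F HF N) as BF. pose proof (rot_orbit0_close G HG N) as BG.
  apply Rabs_le_between in BF. apply Rabs_le_between in BG.
  assert (Rabs (rot G - rot F) * INR N < 3).
  { rewrite <- (Rabs_pos_eq (INR N)) by lra. rewrite <- Rabs_mult. apply Rabs_def1; lra. }
  apply (Rmult_lt_compat_r (INR N)) in HN'; [|lra].
  replace (1 / INR N * INR N) with 1 in HN' by (field; lra).
  apply (Rmult_lt_reg_r (INR N)); lra.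
Qed.

Lemma no_shorter_period F q p : circle_homeo_lift F -> Z.gcd p (Z.of_nat q) = 1%Z ->
  INR q * rot F = IZR p -> forall i y N, (0 < i < q)%nat -> iterR i F y <> y + IZR N.
Proof.
  intros HF Hgcd Hr i y N Hi Hper.
  pose proof (rot_of_periodic_point F HF i y N ltac:(lia) Hper) as Hri.
  assert (E : IZR (N * Z.of_nat q) = IZR (Z.of_nat i * p)).
  { rewrite !mult_IZR, <- !INR_IZR_INZ, <- Hri, <- Hr. ring. }
  apply eq_IZR in E.
  assert (Hdiv : (Z.of_nat q | p * Z.of_nat i)%Z) by (exists N; lia).
  apply Z.gauss in Hdiv; [|rewrite Z.gcd_comm; exact Hgcd].
  apply Z.divide_pos_le in Hdiv; lia.
Qed.

Lemma iterR_periodic_transfer F i q a b M p : circle_homeo_lift F ->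
  iterR i F a = b + IZR M ->
  (iterR q F a = a + IZR p <-> iterR q F b = b + IZR p).
Proof.
  intros HF Hab. split; intros Hper.
  - replace b with (iterR i F a + IZR (- M)) by (rewrite opp_IZR; lra).
    rewrite iterR_shift_Z, iterR_comm, Hper, iterR_shift_Z by auto. rewrite opp_IZR. ring.
  - apply (lift_inj _ (iterR_lift F HF i)).
    rewrite iterR_comm, Hab, !iterR_shift_Z, Hper by auto. lra.
Qed.

Section Gap.
Variables F G : R -> R.
Hypothesis HF : circle_homeo_lift F.
Hypothesis HG : circle_homeo_lift G.
Variable d : R.
Hypothesis Hd : 0 < d.
Hypothesis HFG : forall x, F x + d <= G x.
Hypothesis Hrot : rot F = rot G.

Lemma rot_gap_integer n P : (1 <= n)%nat -> Rabs (INR n * rot F - IZR P) < d ->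
  INR n * rot F = IZR P.
Proof.
  intros Hn HP. apply Rabs_def2 in HP. destruct n as [|m]; [lia|].
  destruct (exists_displacement_ge F HF (S m) (INR (S m) * rot F)) as [a Ha]; [auto | lra |].
  destruct (exists_displacement_le G HG (S m) (INR (S m) * rot F)) as [b Hb];
    [auto | rewrite Hrot; lra |].
  pose proof (iterR_gap F G d HF (Rlt_le _ _ Hd) HFG m a).
  pose proof (iterR_gap F G d HF (Rlt_le _ _ Hd) HFG m b).
  destruct (Rle_or_lt (INR (S m) * rot F) (IZR P)).
  - destruct (exists_displacement_eq G HG (S m) (IZR P)) as [z Hz];
      [exists a; lra | exists b; lra |].
    rewrite Hrot. apply (rot_of_periodic_point G HG _ z); auto.
  - destruct (exists_displacement_eq F HF (S m) (IZR P)) as [z Hz];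
      [exists a; lra | exists b; lra |].
    apply (rot_of_periodic_point F HF _ z); auto.
Qed.

Lemma rot_gap_not_translation n P : (1 <= n)%nat -> ~ (forall x, iterR n F x = x + IZR P).
Proof.
  intros Hn Htr. destruct n as [|m]; [lia|].
  pose proof (rot_of_periodic_point F HF _ 0 P Hn (Htr 0)) as HrotF.
  assert (IZR P + d <= INR (S m) * rot G).
  { apply rot_ge_of_displacement_ge; auto. intros x.
    pose proof (iterR_gap F G d HF (Rlt_le _ _ Hd) HFG m x) as Hx. rewrite Htr in Hx. lra. }
  rewrite Hrot in HrotF. lra.
Qed.

End Gap.

Section Persistence.
Variable F : R -> R.
Hypothesis HF : circle_homeo_lift F.
Variables (n : nat) (P : Z) (x0 y : R).
Hypothesis Hy : iterR n F y = y + IZR P.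

Lemma periodic_orbit_persists_above : iterR n F x0 < x0 + IZR P ->
  exists eta, 0 < eta /\ forall G, circle_homeo_lift G -> (forall x, F x <= G x) ->
  (forall x, Rabs (G x - F x) < eta) -> exists z, iterR n G z = z + IZR P.
Proof.
  intros Hx0.
  destruct (iterR_near F (proj1 HF) n x0 (x0 + IZR P - iterR n F x0)) as [eta [Heta Hnear]];
    [lra|].
  exists eta. split; auto. intros G HG HFG HGF.
  specialize (Hnear G HGF). apply Rabs_def2 in Hnear.
  pose proof (iterR_le_of_le F G HF HFG n y).
  apply exists_displacement_eq; auto; [exists y | exists x0]; lra.
Qed.

Lemma periodic_orbit_persists_below : x0 + IZR P < iterR n F x0 ->
  exists eta, 0 < eta /\ forall G, circle_homeo_lift G -> (forall x, G x <= F x) ->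
  (forall x, Rabs (G x - F x) < eta) -> exists z, iterR n G z = z + IZR P.
Proof.
  intros Hx0.
  destruct (iterR_near F (proj1 HF) n x0 (iterR n F x0 - (x0 + IZR P))) as [eta [Heta Hnear]];
    [lra|].
  exists eta. split; auto. intros G HG HGF HFG.
  specialize (Hnear G HFG). apply Rabs_def2 in Hnear.
  pose proof (iterR_le_of_le G F HG HGF n y).
  apply exists_displacement_eq; auto; [exists x0 | exists y]; lra.
Qed.

End Persistence.

(** * Piecewise-linear lifts *)

Definition pl_lift (F : R -> R) (L a0 a1 : R) : Prop :=
  circle_homeo_lift F /\ 1 < L /\ a0 < a1 /\ a1 < a0 + 1 /\
  (forall x y, a0 <= x <= a1 -> a0 <= y <= a1 -> F y - F x = L * (y - x)) /\
  (forall x y, a1 <= x <= a0 + 1 -> a1 <= y <= a0 + 1 -> F y - F x = (y - x) / L).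

Lemma Lambda_gt_1 alpha theta : 0 < alpha -> alpha < theta -> theta < PI / 2 ->
  1 < Lambda alpha theta.
Proof.
  intros H0 H1 H2. unfold Lambda. pose proof PI_RGT_0.
  assert (0 < sin (theta - alpha)) by (apply sin_gt_0; lra).
  assert (0 < cos theta) by (apply cos_gt_0; lra).
  assert (0 < sin alpha) by (apply sin_gt_0; lra).
  assert (sin (theta + alpha) - sin (theta - alpha) = 2 * cos theta * sin alpha)
    by (rewrite sin_plus, sin_minus; ring).
  apply (Rmult_lt_reg_r (sin (theta - alpha))); [lra|].
  unfold Rdiv. rewrite Rmult_assoc, Rinv_l by lra. nra.
Qed.

Lemma trap_type_pl_lift F : trap_type F -> exists L a0 a1, pl_lift F L a0 a1.
Proof.
  intros [alpha [theta [a0 [a1 [H0 [H1 [H2 [HF [H01 [H10 [Hup [Hdown _]]]]]]]]]]]].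
  exists (Lambda alpha theta), a0, a1. repeat split; auto using Lambda_gt_1; apply HF.
Qed.

Definition right_slope (G : R -> R) (x s : R) : Prop :=
  exists d, 0 < d /\ forall y, x <= y < x + d -> G y - G x = s * (y - x).

Lemma right_slope_unique G x s t : right_slope G x s -> right_slope G x t -> s = t.
Proof.
  intros [d [Hd Hs]] [e [He Ht]].
  set (y := x + Rmin d e / 2).
  assert (0 < Rmin d e) by (apply Rmin_pos; auto).
  pose proof (Rmin_l d e). pose proof (Rmin_r d e).
  specialize (Hs y ltac:(unfold y; lra)). specialize (Ht y ltac:(unfold y; lra)).
  apply (Rmult_eq_reg_r (y - x)); [lra | unfold y; lra].
Qed.

Lemma right_slope_comp G H x s t : 0 < s -> right_slope G x s -> right_slope H (G x) t ->
  right_slope (fun z => H (G z)) x (t * s).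
Proof.
  intros Hs [d [Hd HG]] [e [He HH]].
  exists (Rmin d (e / s)). split; [apply Rmin_pos; [auto | apply Rdiv_lt_0_compat; auto]|].
  intros y Hy. pose proof (Rmin_l d (e / s)). pose proof (Rmin_r d (e / s)).
  specialize (HG y ltac:(lra)).
  assert (Hys : s * (y - x) < e).
  { assert (Hyx : y - x < e / s) by lra.
    apply (Rmult_lt_compat_l s) in Hyx; [|lra].
    replace (s * (e / s)) with e in Hyx by (field; lra). exact Hyx. }
  rewrite (HH (G y)) by nra. rewrite HG. ring.
Qed.

Lemma powerRZ_lt_compat L m n : 1 < L -> (m < n)%Z -> powerRZ L m < powerRZ L n.
Proof.
  intros HL Hmn. rewrite !powerRZ_Rpower by lra. apply Rpower_lt; auto. apply IZR_lt, Hmn.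
Qed.

Lemma powerRZ_le_compat L m n : 1 < L -> (m <= n)%Z -> powerRZ L m <= powerRZ L n.
Proof.
  intros HL Hmn. destruct (Z.eq_dec m n) as [->|Hne]; [lra|].
  left. apply powerRZ_lt_compat; auto. lia.
Qed.

Section PiecewiseLinear.
Variables (F : R -> R) (L a0 a1 : R).
Hypothesis HP : pl_lift F L a0 a1.

Let HF : circle_homeo_lift F := proj1 HP.
Let HL : 1 < L := proj1 (proj2 HP).

Definition slope_exp (z : R) : Z :=
  if Rlt_dec (z - IZR (Int_part (z - a0))) a1 then 1%Z else (-1)%Z.

Lemma slope_exp_cases z : slope_exp z = 1%Z \/ slope_exp z = (-1)%Z.
Proof. unfold slope_exp. destruct Rlt_dec; auto. Qed.

Lemma slope_exp_eq_1 z : slope_exp z = 1%Z <-> exists N, a0 + IZR N <= z < a1 + IZR N.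
Proof.
  pose proof HP as [_ [_ [H01 [H10 _]]]].
  pose proof (Int_part_bounds (z - a0)).
  unfold slope_exp. split.
  - destruct Rlt_dec as [Hz|Hz]; intros E; [|discriminate].
    exists (Int_part (z - a0)). lra.
  - intros [N HN]. rewrite <- (Int_part_spec (z - a0) N) by lra.
    destruct Rlt_dec as [Hz|Hz]; [reflexivity | lra].
Qed.

Lemma right_slope_lift x : right_slope F x (powerRZ L (slope_exp x)).
Proof.
  pose proof HP as [_ [_ [H01 [H10 [Hup Hdown]]]]].
  set (k := Int_part (x - a0)). pose proof (Int_part_bounds (x - a0)) as Hk. fold k in Hk.
  set (y := x - IZR k).
  assert (Hshift : forall z, F z - F x = F (z - IZR k) - F y).
  { intros z. unfold y.
    replace (F z) with (F ((z - IZR k) + IZR k)) by (f_equal; ring).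
    replace (F x) with (F ((x - IZR k) + IZR k)) by (f_equal; ring).
    rewrite !(lift_shift_Z F HF). ring. }
  unfold slope_exp. fold k. fold y. destruct Rlt_dec as [Hy|Hy]; simpl.
  - exists (a1 - y). split; [lra|]. intros z Hz.
    rewrite Hshift, Hup by (unfold y in *; lra). unfold y. ring.
  - exists (a0 + 1 - y). split; [unfold y; lra|]. intros z Hz.
    rewrite Hshift, Hdown by (unfold y in *; lra). unfold y. field. lra.
Qed.

Fixpoint orbit_slope_exp (n : nat) (x : R) : Z :=
  match n with
  | O => 0%Z
  | S m => (orbit_slope_exp m x + slope_exp (iterR m F x))%Z
  end.

Lemma right_slope_iterR n x : right_slope (iterR n F) x (powerRZ L (orbit_slope_exp n x)).
Proof.
  induction n as [|n IH].
  - exists 1. split; [lra|]. intros y _. simpl. ring.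
  - simpl. rewrite powerRZ_add, Rmult_comm by lra.
    apply (right_slope_comp (iterR n F) F); [apply powerRZ_lt; lra | exact IH |].
    apply right_slope_lift.
Qed.

Lemma orbit_slope_exp_even n x : Z.even (orbit_slope_exp n x) = Z.even (Z.of_nat n).
Proof.
  induction n as [|n IH]; [reflexivity|].
  simpl orbit_slope_exp. rewrite Z.even_add, IH, Nat2Z.inj_succ, Z.even_succ, <- Z.negb_even.
  destruct (slope_exp_cases (iterR n F x)) as [E|E]; rewrite E;
    destruct (Z.even (Z.of_nat n)); reflexivity.
Qed.

Lemma even_of_iterR_translation q c : (forall x, iterR q F x = x + c) ->
  Z.even (Z.of_nat q) = true.
Proof.
  intros Htr.
  assert (Hid : right_slope (iterR q F) 0 1).
  { exists 1. split; [lra|]. intros y _. rewrite !Htr. ring. }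
  pose proof (right_slope_unique _ _ _ _ (right_slope_iterR q 0) Hid) as E.
  rewrite <- (orbit_slope_exp_even q 0).
  rewrite <- (powerRZ_O L) in E.
  destruct (Z.lt_trichotomy (orbit_slope_exp q 0) 0) as [H|[->|H]]; [| reflexivity |];
    apply (powerRZ_lt_compat L) in H; auto; lra.
Qed.

Lemma slope_exp_drop z0 z : z0 < z -> slope_exp z0 = 1%Z -> slope_exp z = (-1)%Z ->
  exists N, z0 < a1 + IZR N <= z.
Proof.
  intros Hz E0 E. apply slope_exp_eq_1 in E0 as [N HN]. exists N.
  split; [lra|]. apply Rnot_lt_le. intros Hlt.
  assert (slope_exp z = 1%Z) by (apply slope_exp_eq_1; exists N; lra). congruence.
Qed.

Section EvenPeriodGap.
Variables (q : nat) (p : Z) (y0 y1 : R).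
Hypothesis Hq : Z.even (Z.of_nat q) = true.
Hypothesis Hminimal : forall i y N, (0 < i < q)%nat -> iterR i F y <> y + IZR N.
Hypothesis Hy01 : y0 < y1.
Hypothesis Hy0 : iterR q F y0 = y0 + IZR p.
Hypothesis Hy1 : iterR q F y1 = y1 + IZR p.
Hypothesis Hgap : forall y, y0 < y < y1 -> y + IZR p < iterR q F y.

Definition crosses_break (y : R) (k : nat) : Prop :=
  exists N, iterR k F y0 < a1 + IZR N <= iterR k F y.

Lemma crossing_point y k : y0 < y < y1 -> crosses_break y k ->
  exists c N, y0 < c <= y /\ iterR k F c = a1 + IZR N.
Proof.
  intros Hy [N HN].
  destruct (ivt_on_closed (iterR k F) y0 y (a1 + IZR N)) as [c [Hc Ec]];
    [apply continuous_on_closed_of_continuity, (iterR_lift F HF k) | lra | lra |].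
  exists c, N. split; [|exact Ec].
  split; [|lra]. destruct (Req_dec c y0) as [->|]; lra.
Qed.

(* Two crossings at times [k < j] would produce a point of the gap whose orbit returns
   to a translate of itself after [j - k < q] steps. *)
Lemma crossing_unique y k j : y0 < y < y1 -> (k < j < q)%nat ->
  crosses_break y k -> crosses_break y j -> False.
Proof.
  intros Hy Hkj Ck Cj.
  destruct (crossing_point y k Hy Ck) as [c [N [Hc Ec]]].
  destruct (crossing_point y j Hy Cj) as [c' [N' [Hc' Ec']]].
  set (i := (j - k)%nat). set (M := (N' - N)%Z).
  assert (Ei : iterR i F c' = c + IZR M).
  { apply (lift_inj _ (iterR_lift F HF k)).
    rewrite <- iterR_add. replace (k + i)%nat with j by (unfold i; lia).
    rewrite Ec', iterR_shift_Z, Ec by auto. unfold M. rewrite minus_IZR. ring. }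
  assert (Hnot : forall z, y0 < z < y1 -> iterR q F z <> z + IZR p)
    by (intros z Hz E; specialize (Hgap z Hz); lra).
  destruct (Rtotal_order (iterR i F y0) (y0 + IZR M)) as [Hlt|[Heq|Hgt]].
  - destruct (ivt_on_closed (iterR i F) y0 c' (y0 + IZR M)) as [z [Hz Ez]];
      [apply continuous_on_closed_of_continuity, (iterR_lift F HF i) | lra | lra |].
    assert (z <> y0) by (intros ->; lra).
    apply (Hnot z); [lra|]. apply (iterR_periodic_transfer F i q z y0 M p HF Ez), Hy0.
  - apply (Hminimal i y0 M); [unfold i; lia | exact Heq].
  - set (v := iterR i F y0 - IZR M).
    assert (iterR i F y0 < iterR i F c') by (apply (proj1 (proj2 (iterR_lift F HF i))); lra).
    apply (Hnot v); [unfold v; lra|].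
    apply (iterR_periodic_transfer F i q y0 v M p HF); [unfold v; ring | exact Hy0].
Qed.

(* The exponent of [y] falls behind that of [y0] only at a crossing, which happens
   at most once. *)
Lemma orbit_slope_exp_ge y : y0 <= y < y1 ->
  (orbit_slope_exp q y0 - 2 <= orbit_slope_exp q y)%Z.
Proof.
  intros Hy. destruct (Req_dec y y0) as [->|Hne]; [lia|].
  assert (Hy' : y0 < y < y1) by lra.
  assert (Hinv : forall n, (n <= q)%nat ->
    (0 <= orbit_slope_exp n y - orbit_slope_exp n y0)%Z \/
    ((-2 <= orbit_slope_exp n y - orbit_slope_exp n y0)%Z /\
     exists k, (k < n)%nat /\ crosses_break y k)).
  { induction n as [|n IH]; intros Hn; simpl; [left; lia|].
    specialize (IH ltac:(lia)).
    assert (Hlt : iterR n F y0 < iterR n F y)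
      by (apply (proj1 (proj2 (iterR_lift F HF n))); lra).
    destruct (slope_exp_cases (iterR n F y0)) as [E0|E0];
      destruct (slope_exp_cases (iterR n F y)) as [E|E]; rewrite E0, E.
    - destruct IH as [H|[H [k [Hk Ck]]]]; [left; lia|].
      right. split; [lia|]. exists k. split; [lia | exact Ck].
    - assert (Cn : crosses_break y n) by (apply slope_exp_drop; auto).
      destruct IH as [H|[H [k [Hk Ck]]]].
      + right. split; [lia|]. exists n. split; [lia | exact Cn].
      + exfalso. apply (crossing_unique y k n); auto; lia.
    - destruct IH as [H|[H _]]; left; lia.
    - destruct IH as [H|[H [k [Hk Ck]]]]; [left; lia|].
      right. split; [lia|]. exists k. split; [lia | exact Ck]. }
  destruct (Hinv q (le_n q)) as [H|[H _]]; lia.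
Qed.

Lemma no_positive_gap : False.
Proof.
  set (M0 := orbit_slope_exp q y0).
  assert (HM0 : (0 < M0)%Z).
  { apply Z.nle_gt. intros HM0.
    destruct (right_slope_iterR q y0) as [d [Hd Hslope]]. fold M0 in Hslope.
    set (y := y0 + Rmin d (y1 - y0) / 2).
    assert (0 < Rmin d (y1 - y0)) by (apply Rmin_pos; lra).
    pose proof (Rmin_l d (y1 - y0)). pose proof (Rmin_r d (y1 - y0)).
    specialize (Hslope y ltac:(unfold y; lra)). specialize (Hgap y ltac:(unfold y; lra)).
    pose proof (powerRZ_le_compat L M0 0 HL HM0) as Hs. rewrite powerRZ_O in Hs.
    assert (0 < y - y0) by (unfold y; lra).
    nra. }
  assert (HM2 : (2 <= M0)%Z).
  { pose proof (orbit_slope_exp_even q y0) as E. fold M0 in E. rewrite Hq in E.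
    apply Z.even_spec in E as [b Hb]. lia. }
  set (m := (y0 + y1) / 2).
  assert (Hmono : iterR q F m - m <= iterR q F y1 - y1).
  { apply (le_of_right_locally_nondecreasing (fun x => iterR q F x - x));
      [apply continuous_on_closed_of_continuity, displacement_continuous, HF | unfold m; lra |].
    intros z Hz. destruct (right_slope_iterR q z) as [d [Hd Hslope]].
    exists d. split; [exact Hd|]. intros w Hw.
    pose proof (orbit_slope_exp_ge z ltac:(unfold m in Hz; lra)) as Hge. fold M0 in Hge.
    pose proof (powerRZ_le_compat L 0 (orbit_slope_exp q z) HL ltac:(lia)) as Hs.
    rewrite powerRZ_O in Hs. specialize (Hslope w Hw). nra. }
  rewrite Hy1 in Hmono. specialize (Hgap m ltac:(unfold m; lra)). lra.
Qed.

End EvenPeriodGap.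
End PiecewiseLinear.

Lemma pl_lift_reflect F L a0 a1 :
  pl_lift F L a0 a1 -> pl_lift (fun x => - F (- x)) L (- a1) (- a0).
Proof.
  intros [HF [HL [H01 [H10 [Hup Hdown]]]]]. pose proof HF as [Hc [Hm Hp]].
  repeat split; try lra.
  - intros x. apply continuity_pt_opp, (continuity_reflect F Hc).
  - intros x y Hxy. apply Ropp_lt_contravar, Hm. lra.
  - intros x. replace (- (x + 1)) with (- x + IZR (-1)) by (simpl; ring).
    rewrite (lift_shift_Z F HF). simpl. ring.
  - intros x y Hx Hy. replace (- F (- y) - - F (- x)) with (F (- x) - F (- y)) by ring.
    rewrite Hup by lra. ring.
  - intros x y Hx Hy. replace (- F (- y) - - F (- x)) with (F (- x + 1) - F (- y + 1))
      by (rewrite !Hp; ring).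
    rewrite Hdown by lra. field. lra.
Qed.

Lemma iterR_reflect F n x : iterR n (fun x => - F (- x)) x = - iterR n F (- x).
Proof. induction n as [|n IH]; simpl; [ring | rewrite IH, Ropp_involutive; reflexivity]. Qed.

Lemma no_negative_gap F L a0 a1 q p y0 y1 : pl_lift F L a0 a1 ->
  Z.even (Z.of_nat q) = true ->
  (forall i y N, (0 < i < q)%nat -> iterR i F y <> y + IZR N) ->
  y0 < y1 -> iterR q F y0 = y0 + IZR p -> iterR q F y1 = y1 + IZR p ->
  (forall y, y0 < y < y1 -> iterR q F y < y + IZR p) -> False.
Proof.
  intros HP Hq Hminimal Hy01 Hy0 Hy1 Hgap.
  apply (no_positive_gap _ _ _ _ (pl_lift_reflect F L a0 a1 HP) q (- p) (- y1) (- y0) Hq).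
  - intros i y N Hi E. rewrite iterR_reflect in E. apply (Hminimal i (- y) (- N)%Z Hi).
    rewrite opp_IZR. lra.
  - lra.
  - rewrite iterR_reflect, Ropp_involutive, Hy1, opp_IZR. ring.
  - rewrite iterR_reflect, Ropp_involutive, Hy0, opp_IZR. ring.
  - intros y Hy. rewrite iterR_reflect, opp_IZR. specialize (Hgap (- y) ltac:(lra)). lra.
Qed.

Lemma even_period_translation F L a0 a1 q p : pl_lift F L a0 a1 -> (1 <= q)%nat ->
  Z.even (Z.of_nat q) = true -> Z.gcd p (Z.of_nat q) = 1%Z -> INR q * rot F = IZR p ->
  forall x, iterR q F x = x + IZR p.
Proof.
  intros HP Hq1 Hq Hgcd Hr. pose proof (proj1 HP) as HF.
  pose proof (no_shorter_period F q p HF Hgcd Hr) as Hminimal.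
  apply NNPP. intros Hnot. apply not_all_ex_not in Hnot as [x0 Hx0].
  destruct (exists_periodic_point F HF q (IZR p) Hq1 Hr) as [z Hz].
  set (k := fun x => iterR q F x - x - IZR p).
  assert (Hk : continuity k).
  { intros x. apply continuity_pt_minus; [apply displacement_continuous, HF|].
    apply continuity_pt_const. intros ? ?; reflexivity. }
  assert (Hkp : forall x, k (x + 1) = k x)
    by (intros x; unfold k; rewrite displacement_periodic by exact HF; reflexivity).
  destruct (Rtotal_order (k x0) 0) as [Hneg|[Hzero|Hpos]].
  - destruct (positive_component (fun x => - k x) x0) as [y0 [y1 [Hy01 [Hk0 [Hk1 Hin]]]]].
    + intros x. apply continuity_pt_opp, Hk.
    + intros x. rewrite Hkp. reflexivity.
    + lra.
    + exists z. unfold k. rewrite Hz. lra.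
    + apply (no_negative_gap F L a0 a1 q p y0 y1); auto; unfold k in *; try lra.
      intros y Hy. specialize (Hin y Hy). lra.
  - apply Hx0. unfold k in Hzero. lra.
  - destruct (positive_component k x0) as [y0 [y1 [Hy01 [Hk0 [Hk1 Hin]]]]]; auto.
    + exists z. unfold k. rewrite Hz. lra.
    + apply (no_positive_gap F L a0 a1 HP q p y0 y1); auto; unfold k in *; try lra.
      intros y Hy. specialize (Hin y Hy). lra.
Qed.

(** * Rational approximation *)

Lemma Z_lowest_terms P Q : (0 < Q)%Z -> exists g p q,
  (0 < g)%Z /\ (0 < q)%Z /\ P = (p * g)%Z /\ Q = (q * g)%Z /\ Z.gcd p q = 1%Z.
Proof.
  intros HQ. set (g := Z.gcd P Q).
  assert (Hg : (0 < g)%Z).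
  { pose proof (Z.gcd_nonneg P Q). destruct (Z.eq_dec g 0) as [E|E]; [|unfold g in *; lia].
    apply Z.gcd_eq_0 in E. lia. }
  destruct (Z.gcd_divide_l P Q) as [p Hp]. destruct (Z.gcd_divide_r P Q) as [q Hq].
  fold g in Hp, Hq.
  exists g, p, q. repeat split; auto; [nia|].
  pose proof (Z.gcd_div_gcd P Q g ltac:(lia) eq_refl) as E.
  rewrite Hp, Hq, !Z.div_mul in E by lia. exact E.
Qed.

Lemma odd_den_rational_of_odd P Q : (0 < Q)%Z -> Z.odd Q = true ->
  odd_den_rational (IZR P / IZR Q).
Proof.
  intros HQ Hodd. right.
  destruct (Z_lowest_terms P Q HQ) as [g [p [q [Hg [Hq [-> [-> Hgcd]]]]]]].
  exists p, q. repeat split; auto.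
  - rewrite Z.odd_mul in Hodd. destruct (Z.odd q); auto.
  - rewrite !mult_IZR. field. split; apply not_0_IZR; lia.
Qed.

Lemma odd_den_rational_period r : odd_den_rational r ->
  exists n P, (1 <= n)%nat /\ Z.odd (Z.of_nat n) = true /\ INR n * r = IZR P.
Proof.
  intros [->|[p [q [_ [Hq ->]]]]].
  - exists 1%nat, 0%Z. repeat split; [lia | simpl; ring].
  - assert (Hq0 : q <> 0%Z) by (intros ->; discriminate).
    exists (Z.to_nat (Z.abs q)), (p * Z.sgn q)%Z.
    rewrite INR_IZR_INZ, Z2Nat.id by lia. repeat split.
    + lia.
    + destruct (Z.abs_eq_or_opp q) as [E|E]; rewrite E; [|rewrite Z.odd_opp]; exact Hq.
    + rewrite <- Z.sgn_abs, !mult_IZR. field. apply not_0_IZR, Hq0.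
Qed.

Lemma odd_den_rational_between a b : a < b -> exists r, odd_den_rational r /\ a < r < b.
Proof.
  intros Hab.
  destruct (eventually_inv_INR_lt (b - a)) as [N [HN HN']]; [lra|].
  specialize (HN' N (le_n N)).
  set (Q := (2 * Z.of_nat N + 1)%Z).
  assert (HQ : IZR Q = 2 * INR N + 1)
    by (unfold Q; rewrite plus_IZR, mult_IZR, <- INR_IZR_INZ; reflexivity).
  assert (HN0 : 0 < INR N) by (apply lt_0_INR; lia).
  assert (HQN : 1 < (b - a) * IZR Q).
  { apply (Rmult_lt_compat_r (INR N)) in HN'; [|lra].
    replace (1 / INR N * INR N) with 1 in HN' by (field; lra).
    rewrite HQ. nra. }
  set (P := (Int_part (a * IZR Q) + 1)%Z).
  pose proof (Int_part_bounds (a * IZR Q)).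
  assert (HP : a * IZR Q < IZR P <= a * IZR Q + 1) by (unfold P; rewrite plus_IZR; lra).
  exists (IZR P / IZR Q). split.
  - apply odd_den_rational_of_odd; [lia|].
    unfold Q. rewrite Z.add_comm, Z.odd_add_mul_2. reflexivity.
  - assert (HQ0 : 0 < IZR Q) by lra.
    split; apply (Rmult_lt_reg_r (IZR Q)); auto;
      unfold Rdiv; rewrite Rmult_assoc, Rinv_l, Rmult_1_r by lra; nra.
Qed.

Lemma pigeonhole N (f : nat -> nat) : (forall k, (k <= N)%nat -> (f k < N)%nat) ->
  exists i j, (i < j <= N)%nat /\ f i = f j.
Proof.
  revert f. induction N as [|N IH]; intros f Hf; [specialize (Hf 0%nat (le_n 0)); lia|].
  destruct (classic (exists k, (k <= N)%nat /\ f k = f (S N))) as [[k [Hk E]]|Hnone].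
  - exists k, (S N). split; [lia | exact E].
  - assert (Hne : forall k, (k <= N)%nat -> f k <> f (S N))
      by (intros k Hk E; apply Hnone; exists k; auto).
    (* squeeze the values on [0..N] into [0..N-1] by closing the hole at [f (S N)] *)
    set (g := fun k => if Nat.ltb (f k) (f (S N)) then f k else (f k - 1)%nat).
    destruct (IH g) as [i [j [Hij E]]].
    + intros k Hk. specialize (Hne k Hk). pose proof (Hf k ltac:(lia)).
      pose proof (Hf (S N) (le_n _)). unfold g.
      destruct (Nat.ltb_spec (f k) (f (S N))); lia.
    + exists i, j. split; [lia|].
      pose proof (Hne i ltac:(lia)). pose proof (Hne j ltac:(lia)). unfold g in E.
      destruct (Nat.ltb_spec (f i) (f (S N))), (Nat.ltb_spec (f j) (f (S N))); lia.
Qed.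

Lemma dirichlet_approximation r d : 0 < d ->
  exists n P, (1 <= n)%nat /\ Rabs (INR n * r - IZR P) < d.
Proof.
  intros Hd. destruct (eventually_inv_INR_lt d Hd) as [N [HN HN']].
  specialize (HN' N (le_n N)).
  assert (HN0 : 0 < INR N) by (apply lt_0_INR; lia).
  set (frac := fun k : nat => INR k * r - IZR (Int_part (INR k * r))).
  assert (Hfrac : forall k, 0 <= frac k < 1)
    by (intros k; unfold frac; pose proof (Int_part_bounds (INR k * r)); lra).
  set (box := fun k => Z.to_nat (Int_part (INR N * frac k))).
  assert (Hbox : forall k, INR (box k) <= INR N * frac k < INR (box k) + 1).
  { intros k. unfold box. rewrite INR_IZR_INZ, Z2Nat.id; [apply Int_part_bounds|].
    pose proof (Int_part_bounds (INR N * frac k)). specialize (Hfrac k).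
    assert (Hgt : -1 < IZR (Int_part (INR N * frac k))) by nra.
    apply lt_IZR in Hgt. lia. }
  destruct (pigeonhole N box) as [i [j [Hij E]]].
  { intros k Hk. specialize (Hbox k). specialize (Hfrac k).
    apply INR_lt. nra. }
  exists (j - i)%nat, (Int_part (INR j * r) - Int_part (INR i * r))%Z.
  split; [lia|]. rewrite minus_INR, minus_IZR by lia.
  pose proof (Hbox i) as Bi. pose proof (Hbox j) as Bj. rewrite E in Bi.
  assert (Hclose : Rabs (frac j - frac i) * INR N < 1).
  { rewrite <- (Rabs_pos_eq (INR N)) by lra. rewrite <- Rabs_mult.
    apply Rabs_def1; lra. }
  replace ((INR j - INR i) * r - (IZR (Int_part (INR j * r)) - IZR (Int_part (INR i * r))))
    with (frac j - frac i) by (unfold frac; ring).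
  apply (Rmult_lt_reg_r (INR N)); auto.
  apply (Rmult_lt_compat_r (INR N)) in HN'; [|lra].
  replace (1 / INR N * INR N) with 1 in HN' by (field; lra). lra.
Qed.

(** * Monotone families *)

Section MonotoneFamily.
Variables (F : R -> R -> R) (u1 u2 : R).
Hypothesis Hpl : forall u, u1 <= u <= u2 -> exists L a0 a1, pl_lift (F u) L a0 a1.
Hypothesis Hcont : forall u, u1 <= u <= u2 -> forall eps, 0 < eps -> exists delta, 0 < delta /\
  forall v, u1 <= v <= u2 -> Rabs (v - u) < delta -> forall x, Rabs (F v x - F u x) < eps.
Hypothesis Hincr : forall u v, u1 <= u -> u < v -> v <= u2 -> forall x, F u x < F v x.

Let rho u := rot (F u).

Lemma family_lift u : u1 <= u <= u2 -> circle_homeo_lift (F u).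
Proof.
  intros Hu. destruct (Hpl u Hu) as [L [a0 [a1 [HF _]]]]. exact HF.
Qed.

Lemma family_le u v : u1 <= u -> u <= v -> v <= u2 -> forall x, F u x <= F v x.
Proof.
  intros Hu Huv Hv x. destruct (Rle_lt_or_eq_dec u v Huv) as [Hlt|<-]; [|lra].
  left. apply Hincr; auto.
Qed.

Lemma rho_nondecreasing u v : u1 <= u -> u <= v -> v <= u2 -> rho u <= rho v.
Proof.
  intros Hu Huv Hv. apply rot_le_of_le; [apply family_lift; lra .. |].
  apply family_le; auto.
Qed.

Lemma rho_continuous : continuous_on_closed u1 u2 rho.
Proof.
  intros u Hu eps He.
  destruct (rot_continuous (F u) (family_lift u Hu) eps He) as [eta [Heta Hrot]].
  destruct (Hcont u Hu eta Heta) as [d [Hd Hnear]].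
  exists d. split; auto. intros v Hv Hvu. apply Hrot; [apply family_lift | apply Hnear]; auto.
Qed.

Lemma rho_eq_of_periodic_point w n P r z : u1 <= w <= u2 -> (1 <= n)%nat ->
  INR n * r = IZR P -> iterR n (F w) z = z + IZR P -> rho w = r.
Proof.
  intros Hw Hn Hr Hz. pose proof (lt_0_INR n ltac:(lia)).
  apply (Rmult_eq_reg_l (INR n)); [|lra].
  rewrite Hr. apply (rot_of_periodic_point _ (family_lift w Hw) n z); auto.
Qed.

Lemma periodic_orbit_persists_right u b n P x0 y : u1 <= u -> u < b -> b <= u2 ->
  iterR n (F u) y = y + IZR P -> iterR n (F u) x0 < x0 + IZR P ->
  exists d, u < d <= b /\ forall w, u <= w <= d -> exists z, iterR n (F w) z = z + IZR P.
Proof.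
  intros Hu Hub Hb Hy Hx0.
  destruct (periodic_orbit_persists_above (F u) (family_lift u ltac:(lra)) n P x0 y Hy Hx0)
    as [eta [Heta Hpers]].
  destruct (Hcont u ltac:(lra) eta Heta) as [delta [Hdelta Hnear]].
  exists (Rmin b (u + delta / 2)).
  pose proof (Rmin_l b (u + delta / 2)). pose proof (Rmin_r b (u + delta / 2)).
  split; [split; [apply Rmin_glb_lt|]; lra|]. intros w Hw.
  apply Hpers; [apply family_lift; lra | apply family_le; lra |].
  apply Hnear; [lra | apply Rabs_def1; lra].
Qed.

Lemma periodic_orbit_persists_left u a n P x0 y : u1 <= a -> a < u -> u <= u2 ->
  iterR n (F u) y = y + IZR P -> x0 + IZR P < iterR n (F u) x0 ->
  exists c, a <= c < u /\ forall w, c <= w <= u -> exists z, iterR n (F w) z = z + IZR P.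
Proof.
  intros Ha Hau Hu Hy Hx0.
  destruct (periodic_orbit_persists_below (F u) (family_lift u ltac:(lra)) n P x0 y Hy Hx0)
    as [eta [Heta Hpers]].
  destruct (Hcont u ltac:(lra) eta Heta) as [delta [Hdelta Hnear]].
  exists (Rmax a (u - delta / 2)).
  pose proof (Rmax_l a (u - delta / 2)). pose proof (Rmax_r a (u - delta / 2)).
  split; [split; [|apply Rmax_lub_lt]; lra|]. intros w Hw.
  apply Hpers; [apply family_lift; lra | apply family_le; lra |].
  apply Hnear; [lra | apply Rabs_def1; lra].
Qed.

(* Mode locking: [F u ^ n] is not a translation since [n] is odd, so its periodic orbit
   survives small monotone perturbations on one side of [u]. *)
Lemma exists_plateau_at_odd_den a b r : u1 <= a -> a < b -> b <= u2 -> rho a < r < rho b ->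
  odd_den_rational r -> exists c d, a <= c /\ c < d /\ d <= b /\
  forall w, c <= w <= d -> rho w = r.
Proof.
  intros Ha Hab Hb Hr Hodd.
  destruct (ivt_on_closed rho a b r) as [u [Hu Hur]];
    [apply (continuous_on_closed_sub u1 u2); auto using rho_continuous | lra | lra |].
  assert (Hau : a < u) by (destruct (Req_dec a u) as [<-|]; lra).
  assert (Hub : u < b) by (destruct (Req_dec u b) as [->|]; lra).
  destruct (odd_den_rational_period r Hodd) as [n [P [Hn [Hn_odd HnP]]]].
  pose proof (family_lift u ltac:(lra)) as HFu.
  destruct (exists_periodic_point (F u) HFu n (IZR P) Hn) as [y Hy];
    [unfold rho in Hur; rewrite Hur; exact HnP|].
  assert (Hnot : ~ (forall x, iterR n (F u) x = x + IZR P)).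
  { intros Htr. destruct (Hpl u ltac:(lra)) as [L [a0 [a1 HP]]].
    pose proof (even_of_iterR_translation _ _ _ _ HP n (IZR P) Htr) as Heven.
    rewrite <- Z.negb_odd, Hn_odd in Heven. discriminate. }
  apply not_all_ex_not in Hnot as [x0 Hx0].
  destruct (Rtotal_order (iterR n (F u) x0) (x0 + IZR P)) as [Hlt|[Heq|Hgt]]; [|contradiction|].
  - destruct (periodic_orbit_persists_right u b n P x0 y) as [d [Hd Hlock]]; auto; [lra|].
    exists u, d. repeat split; [lra | lra | lra |]. intros w Hw.
    destruct (Hlock w Hw) as [z Hz]. apply (rho_eq_of_periodic_point w n P r z); auto; lra.
  - destruct (periodic_orbit_persists_left u a n P x0 y) as [c [Hc Hlock]]; auto; [lra|].
    exists c, u. repeat split; [lra | lra | lra |]. intros w Hw.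
    destruct (Hlock w Hw) as [z Hz]. apply (rho_eq_of_periodic_point w n P r z); auto; lra.
Qed.

Lemma family_gap c d : u1 <= c -> c < d -> d <= u2 ->
  exists del, 0 < del /\ forall x, F c x + del <= F d x.
Proof.
  intros Hc Hcd Hd.
  pose proof (family_lift c ltac:(lra)) as [HcC [_ HcP]].
  pose proof (family_lift d ltac:(lra)) as [HdC [_ HdP]].
  destruct (periodic_pos_lower_bound (fun x => F d x - F c x)) as [del [Hdel Hmin]].
  - intros x. apply continuity_pt_minus; [apply HdC | apply HcC].
  - intros x. rewrite HcP, HdP. ring.
  - intros x. specialize (Hincr c d Hc Hcd Hd x). lra.
  - exists del. split; auto. intros x. specialize (Hmin x). simpl in Hmin. lra.
Qed.

(* On a plateau [F c + del <= F d]: Dirichlet approximation and [rot_gap_integer] force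
   [rho c = p / q], and [q] even would make [F c ^ q] a translation. *)
Lemma plateau_value_odd_den c d : u1 <= c -> c < d -> d <= u2 ->
  (forall u, c <= u <= d -> rho u = rho c) -> odd_den_rational (rho c).
Proof.
  intros Hc Hcd Hd Hplateau.
  pose proof (family_lift c ltac:(lra)) as HFc. pose proof (family_lift d ltac:(lra)) as HFd.
  destruct (family_gap c d Hc Hcd Hd) as [del [Hdel Hgap]].
  assert (Hrot : rot (F c) = rot (F d)) by (symmetry; apply Hplateau; lra).
  destruct (dirichlet_approximation (rho c) del Hdel) as [n [P [Hn HnP]]].
  pose proof (rot_gap_integer _ _ HFc HFd del Hdel Hgap Hrot n P Hn HnP) as Hint.
  destruct (Z_lowest_terms P (Z.of_nat n)) as [g [p [q [Hg [Hq [EP [En Hgcd]]]]]]]; [lia|].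
  assert (Hqr : IZR q * rho c = IZR p).
  { apply (Rmult_eq_reg_l (IZR g)); [|apply not_0_IZR; lia].
    rewrite INR_IZR_INZ, En, EP, !mult_IZR in Hint. unfold rho. lra. }
  destruct (Z.odd q) eqn:Hodd.
  - right. exists p, q. repeat split; auto.
    apply (Rmult_eq_reg_l (IZR q)); [|apply not_0_IZR; lia].
    rewrite Hqr. field. apply not_0_IZR. lia.
  - exfalso. destruct (Hpl c ltac:(lra)) as [L [a0 [a1 HP]]].
    apply (rot_gap_not_translation _ _ HFc HFd del Hdel Hgap Hrot (Z.to_nat q) p); [lia|].
    apply (even_period_translation _ L a0 a1); rewrite ?Z2Nat.id by lia; auto; [lia| |].
    + rewrite <- Z.negb_odd, Hodd. reflexivity.
    + rewrite INR_IZR_INZ, Z2Nat.id by lia. exact Hqr.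
Qed.

Lemma exists_plateau_near x : u1 < u2 -> u1 <= x <= u2 -> forall eps, 0 < eps ->
  exists c d, u1 <= c /\ c < d /\ d <= u2 /\ (forall y, c <= y <= d -> rho y = rho c) /\
  exists z, c <= z <= d /\ Rabs (z - x) < eps.
Proof.
  intros Hu Hx eps He.
  pose proof (Rmax_l u1 (x - eps / 2)). pose proof (Rmax_r u1 (x - eps / 2)).
  pose proof (Rmin_l u2 (x + eps / 2)). pose proof (Rmin_r u2 (x + eps / 2)).
  set (a := Rmax u1 (x - eps / 2)) in *. set (b := Rmin u2 (x + eps / 2)) in *.
  assert (Hax : a <= x) by (apply Rmax_lub; lra).
  assert (Hxb : x <= b) by (apply Rmin_glb; lra).
  assert (Hab : a < b) by (unfold a, b; apply Rmax_lub_lt; apply Rmin_glb_lt; lra).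
  destruct (Rle_lt_or_eq_dec _ _ (rho_nondecreasing a b ltac:(lra) ltac:(lra) ltac:(lra)))
    as [Hlt|Heq].
  - destruct (odd_den_rational_between (rho a) (rho b) Hlt) as [r [Hodd Hr]].
    destruct (exists_plateau_at_odd_den a b r) as [c [d [Hc [Hcd [Hd Hplateau]]]]]; auto; try lra.
    exists c, d. repeat split; try lra.
    + intros y Hy. rewrite (Hplateau y Hy), (Hplateau c); [reflexivity | lra].
    + exists c. split; [lra | apply Rabs_def1; lra].
  - exists a, b. repeat split; try lra.
    + intros y Hy. pose proof (rho_nondecreasing a y ltac:(lra) ltac:(lra) ltac:(lra)).
      pose proof (rho_nondecreasing y b ltac:(lra) ltac:(lra) ltac:(lra)). lra.
    + exists x. split; [lra|]. rewrite Rminus_diag, Rabs_R0. exact He.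
Qed.

End MonotoneFamily.

Theorem theorem3p3 (F : R -> R -> R) (u1 u2 : R) :
  u1 < u2 ->
  (* each F u is a lift of a map of the type f_{l,alpha,theta} *)
  (forall u, u1 <= u <= u2 -> trap_type (F u)) ->
  (* u |-> F u continuous in sup norm *)
  (forall u, u1 <= u <= u2 -> forall eps, 0 < eps -> exists delta, 0 < delta /\
     forall v, u1 <= v <= u2 -> Rabs (v - u) < delta ->
       forall x, Rabs (F v x - F u x) < eps) ->
  (* u |-> F u x strictly increasing for each x *)
  (forall u v, u1 <= u -> u < v -> v <= u2 -> forall x, F u x < F v x) ->
  rot (F u1) < rot (F u2) ->
  devils_staircase (fun u => rot (F u)) u1 u2 /\
  (forall r, rot (F u1) <= r <= rot (F u2) ->
     exists u, u1 <= u <= u2 /\ rot (F u) = r) /\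
  (forall c d, u1 <= c -> c < d -> d <= u2 ->
     (forall u, c <= u <= d -> rot (F u) = rot (F c)) ->
     odd_den_rational (rot (F c))) /\
  (forall r, rot (F u1) < r < rot (F u2) -> odd_den_rational r ->
     exists c d, u1 <= c /\ c < d /\ d <= u2 /\
       forall u, c <= u <= d -> rot (F u) = r).
Proof.
  intros Hu Htype Hcont Hincr Hrot.
  assert (Hpl : forall u, u1 <= u <= u2 -> exists L a0 a1, pl_lift (F u) L a0 a1)
    by (intros u Hu'; apply trap_type_pl_lift, Htype, Hu').
  pose proof (rho_continuous F u1 u2 Hpl Hcont) as Hrho.
  split; [|split; [|split]].
  - split; [|split; [|split]].
    + intros x y Hx Hxy Hy. apply (rho_nondecreasing F u1 u2 Hpl Hincr); auto.
    + exact Hrho.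
    + exists u1, u2. repeat split; lra.
    + intros x Hx. apply (exists_plateau_near F u1 u2 Hpl Hcont Hincr); auto.
  - intros r Hr. apply (ivt_on_closed _ u1 u2); auto; lra.
  - apply (plateau_value_odd_den F u1 u2 Hpl Hincr).
  - intros r Hr Hodd. apply (exists_plateau_at_odd_den F u1 u2 Hpl Hcont Hincr u1 u2 r); auto; lra.
Qed.
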